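(* Let $\varphi=\frac{1+\sqrt5}{2}$, $F_n=\frac{\varphi^n-(-1/\varphi)^n}{\varphi+1/\varphi}$, $F_0!=1$, $F_n!=F_1\cdots F_n$. Define $$e_F^x=\sum_{n=0}^\infty\frac{x^n}{F_n!},\qquad E_F^x=\sum_{n=0}^\infty(-1)^{\frac{n(n-1)}2}\frac{x^n}{F_n!}.$$ Then both series define entire functions of $x$, and for every constant $k$ and every $x\ne0$, $$D_Fe_F^{kx}=k\,e_F^{kx},\qquad D_FE_F^{kx}=k\,E_F^{-kx},$$ where $D_Ff(x)=\frac{f(\varphi x)-f(-x/\varphi)}{(\varphi+\frac1\varphi)x}$.
   Context: $D_F$ is the Golden derivative; $e_F^{kx}$ means $e_F^{y}$ evaluated at $y=kx$, and similarly for $E_F$. *)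

From Stdlib Require Import Reals.
From Coquelicot Require Import Coquelicot.
Open Scope R_scope.

Definition phi : R := (1 + sqrt 5) / 2.

Definition Fib (n : nat) : R := (phi ^ n - (- / phi) ^ n) / (phi + / phi).

Fixpoint Fibfact (n : nat) : R :=
  match n with
  | O => 1
  | S m => Fibfact m * Fib (S m)
  end.

Definition eF_coef (n : nat) : C := RtoC (/ Fibfact n).
Definition EF_coef (n : nat) : C :=
  RtoC ((-1) ^ (n * (n - 1) / 2) / Fibfact n).

Definition DF (f : C -> C) (x : C) : C :=
  ((f (RtoC phi * x) - f (- x / RtoC phi)) / ((RtoC phi + / RtoC phi) * x))%C.

From Stdlib Require Import Reals Lra Lia FunctionalExtensionality.
From Coquelicot Require Import Coquelicot.
Open Scope R_scope.

(** Both coefficient sequences have modulus [1 / F_n!], and [F_(n+1) >= (n+1)/2],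
    so the ratio test gives an infinite radius of convergence; a power series with
    infinite radius is complex differentiable, by a termwise second-order bound on
    [(z+h)^n - z^n - n h z^(n-1)].  By Binet's formula
    [phi^n - (-1/phi)^n = F_n (phi + 1/phi)], so [D_F] maps [sum a_n x^n] to
    [sum F_(n+1) a_(n+1) x^n].  This shift fixes the coefficients [1/F_n!] of [e_F]
    and multiplies those of [E_F] by [(-1)^n], because
    [(n+1) n / 2 = n (n-1) / 2 + n]; the factor [(-1)^n] turns [x] into [-x]. *)

Lemma phi_pos : 0 < phi.
Proof. unfold phi; pose proof (sqrt_lt_R0 5); lra. Qed.

Lemma phi_sqr : phi ^ 2 = phi + 1.
Proof. unfold phi; pose proof (sqrt_sqrt 5); nra. Qed.

Lemma inv_phi : / phi = phi - 1.
Proof.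
  pose proof phi_pos; pose proof phi_sqr.
  apply Rmult_eq_reg_l with phi; [rewrite Rinv_r|]; nra.
Qed.

Lemma phi_plus_inv_pos : 0 < phi + / phi.
Proof. pose proof phi_pos; pose proof (Rinv_0_lt_compat _ phi_pos); lra. Qed.

Lemma pow_SS_of_golden (r : R) n : r ^ 2 = r + 1 -> r ^ S (S n) = r ^ S n + r ^ n.
Proof.
  intros Hr; replace (r ^ S (S n)) with (r ^ 2 * r ^ n) by (simpl; ring).
  rewrite Hr; simpl; ring.
Qed.

Lemma Fib_SS n : Fib (S (S n)) = Fib (S n) + Fib n.
Proof.
  assert (Hconj : (- / phi) ^ 2 = - / phi + 1).
  { rewrite inv_phi; transitivity (phi ^ 2 - 2 * phi + 1); [ring|]; rewrite phi_sqr; ring. }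
  unfold Fib; rewrite (pow_SS_of_golden phi n phi_sqr), (pow_SS_of_golden _ n Hconj).
  pose proof phi_pos; field; split; nra.
Qed.

Lemma Fib0 : Fib 0 = 0.
Proof. unfold Fib, Rdiv; simpl; ring. Qed.

Lemma Fib1 : Fib 1 = 1.
Proof. unfold Fib; simpl; pose proof phi_pos; field; split; nra. Qed.

Lemma Fib_S_lower_bound n : 1 <= Fib (S n) /\ (INR n + 1) / 2 <= Fib (S n).
Proof.
  induction n as [n IH] using (well_founded_induction Wf_nat.lt_wf).
  destruct n as [|[|n]].
  - rewrite Fib1; simpl; lra.
  - rewrite Fib_SS, Fib1, Fib0; simpl; lra.
  - rewrite Fib_SS.
    destruct (IH (S n)) as [H1 H2]; [lia|]; destruct (IH n) as [H3 H4]; [lia|].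
    rewrite !S_INR in *; lra.
Qed.

Lemma Fibfact_pos n : 0 < Fibfact n.
Proof.
  induction n as [|n IH]; simpl; [lra|].
  pose proof (proj1 (Fib_S_lower_bound n)); nra.
Qed.

Lemma CV_radius_inv_Fibfact : CV_radius (fun n => / Fibfact n) = p_infty.
Proof.
  apply CV_radius_infinite_DAlembert.
  - intro n; apply Rinv_neq_0_compat, Rgt_not_eq, Fibfact_pos.
  - apply is_lim_seq_ext with (fun n => / Fib (S n)).
    { intro n; pose proof (Fibfact_pos n); pose proof (proj1 (Fib_S_lower_bound n)).
      simpl; rewrite Rabs_pos_eq; [field|apply Rlt_le]; [lra|].
      apply Rdiv_lt_0_compat; apply Rinv_0_lt_compat; nra. }
    change (Finite 0) with (Rbar_inv p_infty).
    apply is_lim_seq_inv; [|discriminate].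
    apply is_lim_seq_le_p_loc with (fun n => INR n * / 2).
    { exists 0%nat; intros n _; pose proof (Fib_S_lower_bound n); lra. }
    replace p_infty with (Rbar_mult p_infty (/ 2)).
    + apply is_lim_seq_scal_r, is_lim_seq_INR.
    + apply is_Rbar_mult_unique, is_Rbar_mult_p_infty_pos; simpl; lra.
Qed.

Notation is_cseries := (@is_series C_AbsRing C_NormedModule).
Notation ex_cseries := (@ex_series C_AbsRing C_NormedModule).

(* [iota] picks the sum when the series converges; otherwise the value is junk. *)
Definition csum (a : nat -> C) (x : C) : C :=
  iota (@is_series C_AbsRing C_CompleteNormedModule (fun n => (a n * x ^ n)%C)).

Lemma csum_unique a x l : is_cseries (fun n => (a n * x ^ n)%C) l -> csum a x = l.
Proof.
  apply (@iota_filterlim_locally C_AbsRing C_CompleteNormedModule).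
  apply Proper_StrongProper, eventually_filter.
Qed.

Lemma is_series_csum a x : ex_cseries (fun n => (a n * x ^ n)%C) ->
  is_cseries (fun n => (a n * x ^ n)%C) (csum a x).
Proof. intros [l Hl]; rewrite (csum_unique _ _ _ Hl); exact Hl. Qed.

Lemma Cmod_series_le (u : nat -> C) (v : nat -> R) lu lv :
  is_cseries u lu -> is_series v lv -> (forall n, Cmod (u n) <= v n) -> Cmod lu <= lv.
Proof.
  intros Hu Hv Huv.
  apply (is_lim_seq_le (fun n => Cmod (sum_n u n)) (sum_n v) (Cmod lu) lv); [| |exact Hv].
  - intro n; eapply Rle_trans;
      [apply (@norm_sum_n_m C_AbsRing C_NormedModule) | apply sum_n_m_le, Huv].
  - exact (filterlim_comp _ _ _ (sum_n u) norm eventually (locally lu) _ Hu (filterlim_norm lu)).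
Qed.

Lemma Cpow_remainder_S (z h : C) n :
  ((z + h) ^ S n - z ^ S n - INR (S n) * h * z ^ n
   = (z + h) * ((z + h) ^ n - z ^ n - INR n * h * z ^ Nat.pred n)
     + INR n * h * h * z ^ Nat.pred n)%C.
Proof.
  destruct n as [|n]; [simpl; ring|].
  rewrite (S_INR (S n)), RtoC_plus; simpl; ring.
Qed.

Lemma Cpow_first_order_remainder (z h : C) n : Cmod h <= 1 ->
  Cmod ((z + h) ^ n - z ^ n - INR n * h * z ^ Nat.pred n)
  <= INR n ^ 2 * Cmod h ^ 2 * (Cmod z + 1) ^ n.
Proof.
  intros Hh; set (R := Cmod z + 1).
  assert (HR : 1 <= R) by (unfold R; pose proof (Cmod_ge_0 z); lra).
  induction n as [|n IH].
  - replace ((z + h) ^ 0 - z ^ 0 - INR 0 * h * z ^ Nat.pred 0)%C with (RtoC 0)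
      by (simpl; ring).
    rewrite Cmod_0; simpl; lra.
  - cbn [Nat.pred]; rewrite Cpow_remainder_S.
    eapply Rle_trans; [apply Cmod_triangle|].
    rewrite !Cmod_mult, Cmod_R, Rabs_pos_eq by apply pos_INR.
    assert (Hzh : Cmod (z + h) <= R) by (eapply Rle_trans; [apply Cmod_triangle|unfold R; lra]).
    assert (Hzn : Cmod (z ^ Nat.pred n) <= R ^ n).
    { rewrite Cmod_pow; apply Rle_trans with (R ^ Nat.pred n); [|apply Rle_pow; lia || lra].
      apply pow_incr; split; [apply Cmod_ge_0|unfold R; lra]. }
    assert (HRn : 1 <= R ^ n) by (apply pow_R1_Rle; lra).
    pose proof (pos_INR n); pose proof (Cmod_ge_0 h); pose proof (Cmod_ge_0 (z + h)).
    pose proof (Cmod_ge_0 ((z + h) ^ n - z ^ n - INR n * h * z ^ Nat.pred n)%C).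
    rewrite S_INR; simpl (R ^ S n).
    set (X := Cmod h ^ 2) in *; assert (HX : 0 <= X) by (unfold X; nra).
    replace (INR n * Cmod h * Cmod h) with (INR n * X) by (unfold X; ring).
    assert (A : Cmod (z + h) * Cmod ((z + h) ^ n - z ^ n - INR n * h * z ^ Nat.pred n)
                <= R * (INR n ^ 2 * X * R ^ n)) by (apply Rmult_le_compat; auto).
    assert (B : INR n * X * Cmod (z ^ Nat.pred n) <= INR n * X * R ^ n)
      by (apply Rmult_le_compat_l; nra).
    assert (Cn : INR n * X * R ^ n <= INR n * X * (R * R ^ n))
      by (apply Rmult_le_compat_l; nra).
    assert (0 <= X * (R * R ^ n)) by (apply Rmult_le_pos; nra).
    assert (0 <= INR n * X * (R * R ^ n)) by (rewrite Rmult_assoc; apply Rmult_le_pos; lra).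
    lra.
Qed.

Lemma is_derive_of_quadratic_remainder (f : C -> C) (z l : C) (M : R) :
  (forall h, Cmod h <= 1 -> Cmod (f (z + h) - f z - h * l)%C <= M * Cmod h ^ 2) ->
  @is_derive C_AbsRing C_NormedModule f z l.
Proof.
  intros Hrem; split; [apply is_linear_scal_l|].
  intros x Hx.
  apply (@is_filter_lim_locally_unique C_AbsRing (AbsRing_NormedModule C_AbsRing)) in Hx.
  subst x.
  intros eps.
  assert (Hd : 0 < Rmin 1 (eps / (Rabs M + 1))).
  { apply Rmin_pos; [lra|]. apply Rdiv_lt_0_compat; [apply cond_pos|pose proof (Rabs_pos M); lra]. }
  exists (mkposreal _ Hd); intros y Hy.
  change (Cmod (y - z)%C < Rmin 1 (eps / (Rabs M + 1))) in Hy.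
  change (Cmod (f y - f z - (y - z) * l)%C <= eps * Cmod (y - z)%C).
  set (h := (y - z)%C) in *.
  replace y with (z + h)%C by (unfold h; ring).
  pose proof (Rmin_l 1 (eps / (Rabs M + 1))); pose proof (Rmin_r 1 (eps / (Rabs M + 1))).
  pose proof (Cmod_ge_0 h); pose proof (Rabs_pos M); pose proof (Rle_abs M).
  assert (Hh : Cmod h * (Rabs M + 1) <= eps).
  { apply Rle_trans with (eps / (Rabs M + 1) * (Rabs M + 1)); [apply Rmult_le_compat_r; lra|].
    right; field; lra. }
  eapply Rle_trans; [apply Hrem; lra|]. simpl; nra.
Qed.

Definition infinite_radius (a : nat -> C) : Prop :=
  forall r : R, ex_series (fun n => Cmod (a n) * r ^ n).

Definition deriv_coef (a : nat -> C) (n : nat) : C := (INR (S n) * a (S n))%C.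

Lemma INR_sqr_le_pow4 n : INR n ^ 2 <= 4 ^ n.
Proof.
  assert (H2 : INR n <= 2 ^ n).
  { induction n as [|n IH]; [simpl; lra|].
    rewrite S_INR; simpl; pose proof (pow_R1_Rle 2 n); lra. }
  replace 4 with (2 ^ 2) by (simpl; ring); rewrite <- pow_mult, Nat.mul_comm, pow_mult.
  pose proof (pos_INR n); apply pow_incr; lra.
Qed.

Lemma ex_series_csum (a : nat -> C) x :
  infinite_radius a -> ex_cseries (fun n => (a n * x ^ n)%C).
Proof.
  intros Ha.
  apply (@ex_series_le C_AbsRing C_CompleteNormedModule _ (fun n => Cmod (a n) * Cmod x ^ n)).
  - intro n; change (Cmod (a n * x ^ n)%C <= Cmod (a n) * Cmod x ^ n).
    rewrite Cmod_mult, Cmod_pow; lra.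
  - apply Ha.
Qed.

Section InfiniteRadius.

Variable a : nat -> C.
Hypothesis Ha : infinite_radius a.

Lemma ex_series_sqr_weighted r : 0 <= r ->
  ex_series (fun n => INR n ^ 2 * (Cmod (a n) * r ^ n)).
Proof.
  intros Hr.
  apply (@ex_series_le R_AbsRing R_CompleteNormedModule _ (fun n => Cmod (a n) * (4 * r) ^ n)).
  - intro n; change (Rabs (INR n ^ 2 * (Cmod (a n) * r ^ n)) <= Cmod (a n) * (4 * r) ^ n).
    pose proof (Cmod_ge_0 (a n)); pose proof (pow_le r n Hr); pose proof (INR_sqr_le_pow4 n).
    rewrite Rabs_pos_eq, Rpow_mult_distr by (apply Rmult_le_pos; [apply pow2_ge_0|nra]).
    apply Rle_trans with (4 ^ n * (Cmod (a n) * r ^ n)); [|right; ring].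
    apply Rmult_le_compat_r; [apply Rmult_le_pos|]; assumption.
  - apply Ha.
Qed.

Lemma infinite_radius_deriv_coef : infinite_radius (deriv_coef a).
Proof.
  intro r; set (R := Rabs r + 1).
  assert (HR : 1 <= R) by (unfold R; pose proof (Rabs_pos r); lra).
  apply (@ex_series_le R_AbsRing R_CompleteNormedModule _
           (fun n => INR (S n) ^ 2 * (Cmod (a (S n)) * R ^ S n))).
  - intro n; change (Rabs (Cmod (deriv_coef a n) * r ^ n)
                     <= INR (S n) ^ 2 * (Cmod (a (S n)) * R ^ S n)).
    rewrite Rabs_mult, (Rabs_pos_eq (Cmod _)) by apply Cmod_ge_0.
    unfold deriv_coef; rewrite Cmod_mult, Cmod_R, <- RPow_abs.
    rewrite (Rabs_pos_eq (INR _)) by apply pos_INR.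
    assert (Hrn : Rabs r ^ n <= R ^ S n).
    { apply Rle_trans with (R ^ n); [apply pow_incr; unfold R; split; [apply Rabs_pos|lra]|].
      apply Rle_pow; [lra|lia]. }
    pose proof (Cmod_ge_0 (a (S n))); pose proof (pos_INR n).
    apply Rle_trans with (INR (S n) * (Cmod (a (S n)) * R ^ S n)).
    + rewrite Rmult_assoc; apply Rmult_le_compat_l, Rmult_le_compat_l; auto; apply pos_INR.
    + assert (0 <= Cmod (a (S n)) * R ^ S n) by (apply Rmult_le_pos; [|apply pow_le]; lra).
      rewrite S_INR; nra.
  - apply ex_series_incr_1 with (a := fun n => INR n ^ 2 * (Cmod (a n) * R ^ n)).
    apply ex_series_sqr_weighted; lra.
Qed.

Lemma csum_first_order_bound z h : Cmod h <= 1 ->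
  Cmod (csum a (z + h) - csum a z - h * csum (deriv_coef a) z)%C
  <= Series (fun n => INR n ^ 2 * (Cmod (a n) * (Cmod z + 1) ^ n)) * Cmod h ^ 2.
Proof.
  intros Hh.
  assert (Hder : is_cseries (fun n => INR n * a n * z ^ Nat.pred n)%C (csum (deriv_coef a) z)).
  { apply is_series_decr_1.
    replace (plus _ _) with (csum (deriv_coef a) z)
      by (change (csum (deriv_coef a) z = csum (deriv_coef a) z - 0 * a 0%nat * 1)%C; ring).
    refine (is_series_ext _ _ _ _ (is_series_csum _ _ _)).
    - intro n; unfold deriv_coef; simpl; ring.
    - apply ex_series_csum, infinite_radius_deriv_coef. }
  assert (Hrem : is_cseries (fun n => a n * ((z + h) ^ n - z ^ n - INR n * h * z ^ Nat.pred n))%C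
                   (csum a (z + h) - csum a z - h * csum (deriv_coef a) z)%C).
  { refine (is_series_ext _ _ _ _ (is_series_minus _ _ _ _
              (is_series_minus _ _ _ _ (is_series_csum _ _ (ex_series_csum _ _ Ha))
                 (is_series_csum _ _ (ex_series_csum _ _ Ha)))
              (is_series_scal h _ _ Hder))).
    intro n; change (a n * (z + h) ^ n + - (a n * z ^ n) + - (h * (INR n * a n * z ^ Nat.pred n))
                     = a n * ((z + h) ^ n - z ^ n - INR n * h * z ^ Nat.pred n))%C; ring. }
  assert (Hz : 0 <= Cmod z + 1) by (pose proof (Cmod_ge_0 z); lra).
  apply (Cmod_series_le _ _ _ _ Hrem
           (is_series_scal_r _ _ _ (Series_correct _ (ex_series_sqr_weighted _ Hz)))).
  intro n; rewrite Cmod_mult.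
  pose proof (Cpow_first_order_remainder z h n Hh); pose proof (Cmod_ge_0 (a n)).
  apply Rle_trans with (Cmod (a n) * (INR n ^ 2 * Cmod h ^ 2 * (Cmod z + 1) ^ n));
    [apply Rmult_le_compat_l; assumption | right; ring].
Qed.

Lemma is_derive_csum z : @is_derive C_AbsRing C_NormedModule (csum a) z (csum (deriv_coef a) z).
Proof.
  apply (is_derive_of_quadratic_remainder _ _ _
           (Series (fun n => INR n ^ 2 * (Cmod (a n) * (Cmod z + 1) ^ n)))).
  apply csum_first_order_bound.
Qed.

End InfiniteRadius.

Definition golden_shift (a : nat -> C) (n : nat) : C := (Fib (S n) * a (S n))%C.

Lemma Cphi_neq0 : RtoC phi <> 0%R.
Proof. intros Heq; apply RtoC_inj in Heq; pose proof phi_pos; lra. Qed.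

Lemma Cphi_plus_inv_neq0 : (RtoC phi + / RtoC phi)%C <> 0%R.
Proof.
  pose proof phi_pos; rewrite <- RtoC_inv, <- RtoC_plus by lra.
  intros Heq; apply RtoC_inj in Heq; pose proof phi_plus_inv_pos; lra.
Qed.

Lemma Cpow_golden_difference (w : C) n :
  ((phi * w) ^ n - (- w / phi) ^ n = Fib n * (phi + / phi) * w ^ n)%C.
Proof.
  pose proof phi_pos.
  assert (HF : Fib n * (phi + / phi) = phi ^ n - (- / phi) ^ n) by (unfold Fib; field; split; nra).
  replace (- w / phi)%C with (- / phi * w)%C by (unfold Cdiv; ring).
  rewrite !Cpow_mult_l, <- RtoC_inv, <- RtoC_opp, <- RtoC_plus, <- RtoC_mult, HF by lra.
  rewrite RtoC_minus, !RtoC_pow; ring.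
Qed.

Lemma csum_golden_difference (a : nat -> C) (w : C) : infinite_radius a -> w <> 0%R ->
  (csum a (phi * w) - csum a (- w / phi) = (phi + / phi) * w * csum (golden_shift a) w)%C.
Proof.
  intros Ha Hw; pose proof Cphi_plus_inv_neq0 as Hc.
  set (c := (phi + / phi)%C) in *; set (D := (csum a (phi * w) - csum a (- w / phi))%C).
  assert (HFib : is_cseries (fun n => Fib n * a n * w ^ n)%C (/ c * D)%C).
  { refine (is_series_ext _ _ _ _ (is_series_scal (/ c)%C _ _ (is_series_minus _ _ _ _
              (is_series_csum _ _ (ex_series_csum _ _ Ha))
              (is_series_csum _ _ (ex_series_csum _ _ Ha))))).
    intro n; change (/ c * (a n * (phi * w) ^ n + - (a n * (- w / phi) ^ n))
                     = Fib n * a n * w ^ n)%C.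
    transitivity (/ c * (a n * ((phi * w) ^ n - (- w / phi) ^ n)))%C; [ring|].
    rewrite Cpow_golden_difference; fold c; field; exact Hc. }
  assert (Hshift : is_cseries (fun n => w * (golden_shift a n * w ^ n))%C (/ c * D)%C).
  { refine (is_series_ext _ _ _ _ (is_series_incr_1 (fun n => Fib n * a n * w ^ n)%C _ _)).
    - intro n; change (Fib (S n) * a (S n) * w ^ S n = w * (golden_shift a n * w ^ n))%C.
      unfold golden_shift; rewrite Cpow_S; ring.
    - replace (plus _ _) with (/ c * D)%C; [exact HFib|].
      change (/ c * D = / c * D + Fib 0 * a 0%nat * 1)%C; rewrite Fib0; ring. }
  apply (is_series_scal (/ w)%C) in Hshift.
  rewrite (csum_unique (golden_shift a) w (/ w * (/ c * D))%C).
  - field; auto.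
  - refine (is_series_ext _ _ _ _ Hshift); intro n.
    change (/ w * (w * (golden_shift a n * w ^ n)) = golden_shift a n * w ^ n)%C; field; exact Hw.
Qed.

Lemma DF_csum_scaled (a : nat -> C) (k x : C) : infinite_radius a -> x <> 0%R ->
  DF (fun y => csum a (k * y)%C) x = (k * csum (golden_shift a) (k * x))%C.
Proof.
  intros Ha Hx; unfold DF.
  destruct (Ceq_dec k 0%R) as [-> | Hk].
  - rewrite !Cmult_0_l; unfold Cdiv; ring.
  - pose proof Cphi_neq0; pose proof Cphi_plus_inv_neq0.
    replace (k * (phi * x))%C with (phi * (k * x))%C by ring.
    replace (k * (- x / phi))%C with (- (k * x) / phi)%C by (field; assumption).
    rewrite csum_golden_difference by (auto; apply Cmult_neq_0; assumption).
    set (c := (phi + / phi)%C) in *; field; auto.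
Qed.

Lemma ex_series_inv_Fibfact r : ex_series (fun n => / Fibfact n * r ^ n).
Proof. apply ex_pseries_R, CV_radius_inside; rewrite CV_radius_inv_Fibfact; exact I. Qed.

Lemma Cmod_eF_coef n : Cmod (eF_coef n) = / Fibfact n.
Proof.
  unfold eF_coef; rewrite Cmod_R, Rabs_pos_eq; [reflexivity|].
  apply Rlt_le, Rinv_0_lt_compat, Fibfact_pos.
Qed.

Lemma Cmod_EF_coef n : Cmod (EF_coef n) = / Fibfact n.
Proof.
  unfold EF_coef, Rdiv; rewrite Cmod_R, Rabs_mult, pow_1_abs, Rmult_1_l.
  rewrite Rabs_pos_eq; [reflexivity|].
  apply Rlt_le, Rinv_0_lt_compat, Fibfact_pos.
Qed.

Lemma infinite_radius_eF_coef : infinite_radius eF_coef.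
Proof.
  intro r; apply (ex_series_ext (fun n => / Fibfact n * r ^ n)); [|apply ex_series_inv_Fibfact].
  intro n; rewrite Cmod_eF_coef; reflexivity.
Qed.

Lemma infinite_radius_EF_coef : infinite_radius EF_coef.
Proof.
  intro r; apply (ex_series_ext (fun n => / Fibfact n * r ^ n)); [|apply ex_series_inv_Fibfact].
  intro n; rewrite Cmod_EF_coef; reflexivity.
Qed.

Lemma golden_shift_eF_coef n : golden_shift eF_coef n = eF_coef n.
Proof.
  unfold golden_shift, eF_coef; cbn [Fibfact]; rewrite <- RtoC_mult; f_equal.
  pose proof (Fibfact_pos n); pose proof (proj1 (Fib_S_lower_bound n)); field; lra.
Qed.

Lemma triangle_succ m : (S m * (S m - 1) / 2 = m * (m - 1) / 2 + m)%nat.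
Proof.
  replace (S m * (S m - 1))%nat with (m * (m - 1) + m * 2)%nat by (destruct m; simpl; nia).
  apply Nat.div_add; lia.
Qed.

Lemma golden_shift_EF_coef n : golden_shift EF_coef n = (RtoC ((-1) ^ n) * EF_coef n)%C.
Proof.
  unfold golden_shift, EF_coef; cbn [Fibfact].
  rewrite triangle_succ, pow_add, <- !RtoC_mult; f_equal.
  pose proof (Fibfact_pos n); pose proof (proj1 (Fib_S_lower_bound n)); field; lra.
Qed.

Lemma csum_alternate (a : nat -> C) (x : C) :
  csum (fun n => RtoC ((-1) ^ n) * a n)%C x = csum a (- x)%C.
Proof.
  unfold csum; do 2 f_equal; apply functional_extensionality; intro n.
  replace (- x)%C with (RtoC (-1) * x)%C by (apply injective_projections; simpl; ring).
  rewrite Cpow_mult_l, RtoC_pow; ring.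
Qed.

Theorem mainTheorem8 :
  exists eF EF : C -> C,
    (forall x : C,
        @is_series C_AbsRing C_NormedModule (fun n => (eF_coef n * x ^ n)%C) (eF x) /\
        @is_series C_AbsRing C_NormedModule (fun n => (EF_coef n * x ^ n)%C) (EF x)) /\
    (forall z : C,
        @ex_derive C_AbsRing C_NormedModule eF z /\
        @ex_derive C_AbsRing C_NormedModule EF z) /\
    (forall k x : C, x <> RtoC 0 ->
        DF (fun y => eF (k * y)%C) x = (k * eF (k * x))%C /\
        DF (fun y => EF (k * y)%C) x = (k * EF (- k * x))%C).
Proof.
  pose proof infinite_radius_eF_coef as He; pose proof infinite_radius_EF_coef as HE.
  exists (csum eF_coef), (csum EF_coef); split; [|split].
  - intro x; split; apply is_series_csum, ex_series_csum; assumption.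
  - intro z; split; eexists; apply is_derive_csum; assumption.
  - intros k x Hx; rewrite !DF_csum_scaled by assumption; split.
    + rewrite (functional_extensionality _ _ golden_shift_eF_coef); reflexivity.
    + rewrite (functional_extensionality _ _ golden_shift_EF_coef), csum_alternate.
      do 2 f_equal; ring.
Qed.
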